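(* Let $\chi$ be an indecomposable character on $S(2^\infty)$ with GNS triple $(\pi,\mathcal{H},\xi)$. For every nice set $A\subset X$ the weak operator limit $P^A=\mathrm{w\text{-}lim}_{m\to\infty}\pi(s^A_m)$ exists, and $P^A$ is an orthogonal projection.
   Context: Let $X=\{0,1\}^{\mathbb{N}}$, $X_n=\{0,1\}^n$, and $S(2^n)$ the group of all bijections of $X_n$, acting on $X$ by $s((x,a))=(s(x),a)$ ($x\in X_n$, $a\in X$); $S(2^\infty)=\bigcup_n S(2^n)$. A character on a group $G$ is a function $\chi$ with $\chi(g_1g_2)=\chi(g_2g_1)$, $(\chi(g_ig_j^{-1}))_{i,j}$ positive semidefinite for all finite families, and $\chi(e)=1$; it is indecomposable if it is not a nontrivial convex combination of two distinct characters. The GNS triple $(\pi,\mathcal{H},\xi)$ of $\chi$ consists of a unitary representation $\pi$ of $S(2^\infty)$ on a Hilbert space $\mathcal{H}$ and a unit cyclic vector $\xi$ with $\chi(g)=(\pi(g)\xi,\xi)$. For $C\subset X_k$, $C\times X$ denotes the set of sequences in $X$ whose first $k$ coordinates form an element of $C$. A set $A\subset X$ is nice if $A=C\times X$ for some $k\in\mathbb{N}$ and $C\subset X_k$. For such $A$ and $m>k$, $s^A_m\in S(2^\infty)$ is defined by $s^A_m(x)=x$ if $x\in A$ and $s^A_m(x)=(x_1,\dots,x_{m-1},1-x_m,x_{m+1},\dots)$ if $x\notin A$. *)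

From HB Require Import structures.
From mathcomp Require Import all_boot all_order all_fingroup all_algebra.
From mathcomp Require Import complex reals.
Set Implicit Arguments. Unset Strict Implicit. Unset Printing Implicit Defensive.
Import Order.TTheory GRing.Theory Num.Theory.
Local Open Scope ring_scope.

(* Coordinates are indexed from 0: the paper's x_1, x_2, ... are x 0, x 1, ... *)
Definition X := nat -> bool.

Definition prefix (n : nat) (x : X) : n.-tuple bool := [tuple x i | i < n].

(* (t, a) for t in X_n and a in X: here given as t glued onto the tail of x *)
Definition glue (n : nat) (t : n.-tuple bool) (x : X) : X :=
  fun i => if (i < n)%N then nth false t i else x i.

(* g belongs to S(2^infty) = \bigcup_n S(2^n): g acts as s((t,a)) = (s(t),a)
   for some n and some bijection s of X_n *)
Definition finitary (g : X -> X) : Prop :=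
  exists n (s : {perm n.-tuple bool}), forall x, g x = glue (s (prefix n x)) x.

(* A nice set A = C x X with C \subset X_k is given by k and C : {set k.-tuple bool} *)
Definition in_nice (k : nat) (Cs : {set k.-tuple bool}) (x : X) : bool :=
  prefix k x \in Cs.

Definition flip (j : nat) (x : X) : X := fun i => if i == j then ~~ x i else x i.

(* s^A_m: identity on A, flips the paper's coordinate x_m (0-based index m-1) off A.
   (It is an element of S(2^infty) when m > k.) *)
Definition sA (k : nat) (Cs : {set k.-tuple bool}) (m : nat) (x : X) : X :=
  if in_nice Cs x then x else flip m.-1 x.

Section Defs.
Variable R : realType.
Local Notation C := R[i].

(** * Characters on S(2^infty) (functions on the subset of finitary maps) *)
Definition is_character (chi : (X -> X) -> C) : Prop :=
  [/\ (forall g1 g2, finitary g1 -> finitary g2 -> chi (g1 \o g2) = chi (g2 \o g1)),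
      (forall (n : nat) (g ginv : 'I_n -> X -> X) (c : 'I_n -> C),
         (forall i, [/\ finitary (g i), cancel (g i) (ginv i) & cancel (ginv i) (g i)]) ->
         0 <= \sum_(i < n) \sum_(j < n) (c i)^* * chi (g i \o ginv j) * c j)
    & chi id = 1].

Definition indecomposable (chi : (X -> X) -> C) : Prop :=
  is_character chi /\
  forall (t : C) (chi1 chi2 : (X -> X) -> C),
    0 < t < 1 -> is_character chi1 -> is_character chi2 ->
    (forall g, finitary g -> chi g = t * chi1 g + (1 - t) * chi2 g) ->
    (forall g, finitary g -> chi1 g = chi2 g).

Definition is_inner_product (H : lmodType C) (ip : H -> H -> C) : Prop :=
  [/\ (forall a u w v, ip (a *: u + w) v = a * ip u v + ip w v),
      (forall u v, ip u v = (ip v u)^*),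
      (forall u, 0 <= ip u u)
    & (forall u, ip u u = 0 -> u = 0)].

Definition nsq (H : lmodType C) (ip : H -> H -> C) (u : H) : C := ip u u.

Definition is_complete (H : lmodType C) (ip : H -> H -> C) : Prop :=
  forall u : nat -> H,
    (forall e : C, 0 < e -> exists N, forall m n, (N <= m)%N -> (N <= n)%N ->
        nsq ip (u m - u n) < e) ->
    exists l : H, forall e : C, 0 < e -> exists N, forall n, (N <= n)%N ->
        nsq ip (u n - l) < e.

Definition is_hilbert (H : lmodType C) (ip : H -> H -> C) : Prop :=
  is_inner_product ip /\ is_complete ip.

Definition is_unitary_rep (H : lmodType C) (ip : H -> H -> C)
    (pi : (X -> X) -> H -> H) : Prop :=
  [/\ (forall g, finitary g -> forall a u v, pi g (a *: u + v) = a *: pi g u + pi g v),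
      (forall g, finitary g -> bijective (pi g)),
      (forall g, finitary g -> forall u v, ip (pi g u) (pi g v) = ip u v),
      (forall g h, finitary g -> finitary h -> pi (g \o h) =1 pi g \o pi h)
    & pi id =1 id].

Definition is_cyclic (H : lmodType C) (ip : H -> H -> C)
    (pi : (X -> X) -> H -> H) (xi : H) : Prop :=
  forall (v : H) (e : C), 0 < e ->
    exists (n : nat) (g : 'I_n -> X -> X) (c : 'I_n -> C),
      (forall i, finitary (g i)) /\
      nsq ip (v - \sum_(i < n) c i *: pi (g i) xi) < e.

Definition is_GNS_triple (chi : (X -> X) -> C) (H : lmodType C) (ip : H -> H -> C)
    (pi : (X -> X) -> H -> H) (xi : H) : Prop :=
  [/\ is_unitary_rep ip pi, ip xi xi = 1, is_cyclic ip pi xi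
    & forall g, finitary g -> chi g = ip (pi g xi) xi].

Definition wot_limit (H : lmodType C) (ip : H -> H -> C)
    (T : nat -> H -> H) (P : H -> H) : Prop :=
  forall (u v : H) (e : C), 0 < e -> exists N, forall m, (N <= m)%N ->
    `| ip (T m u) v - ip (P u) v | < e.

Definition is_orth_projection (H : lmodType C) (ip : H -> H -> C) (P : H -> H) : Prop :=
  [/\ (forall a u v, P (a *: u + v) = a *: P u + P v),
      P \o P =1 P
    & forall u v, ip (P u) v = ip u (P v)].
End Defs.

(* Write T_i for pi(s^A_m) with m = k + i + 1, a unitary involution. For i, j >= n the
   controlled-not gate adding coordinate j to coordinate i commutes with S(2^n) and
   conjugates s_j into s_i s_j, so by the trace property of chi the coefficients
   <T_i u, v> and <T_i u, T_j v> (i <> j) of vectors in the span of pi(S(2^infty)) xi are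
   eventually equal to one constant. The Gram matrix of the T_i u is thus eventually
   constant off the diagonal, so averages of T_i u over disjoint blocks of indices form a
   Cauchy sequence. Their limit P is linear, bounded, self-adjoint and idempotent, and is
   the weak limit of the T_i on the dense span, hence everywhere. *)

From Pilot Require Import Defs.
From HB Require Import structures.
From mathcomp Require Import all_boot all_order all_fingroup all_algebra.
From mathcomp Require Import complex reals.
From mathcomp Require Import ring zify.
From Stdlib Require Import FunctionalExtensionality ClassicalEpsilon.
Set Implicit Arguments. Unset Strict Implicit. Unset Printing Implicit Defensive.
Import Order.TTheory GRing.Theory Num.Theory.
Local Notation prefix := Defs.prefix.

(** * Finitary maps of the Cantor space *)

Lemma nth_prefix n x i : i < n -> nth false (prefix n x) i = x i.
Proof. by move=> lt_in; have -> : i = Ordinal lt_in by []; rewrite nth_mktuple. Qed.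

Lemma prefix_glue n (t : n.-tuple bool) x : prefix n (glue t x) = t.
Proof.
apply: eq_from_tnth => j.
by rewrite /prefix tnth_mktuple /glue ltn_ord (tnth_nth false).
Qed.

Lemma glue_prefix n x : glue (prefix n x) x = x.
Proof.
apply: functional_extensionality => i; rewrite /glue.
by case: ifP => // lt_in; rewrite nth_prefix.
Qed.

Lemma glueKl n (t t' : n.-tuple bool) x : glue t (glue t' x) = glue t x.
Proof.
apply: functional_extensionality => i; rewrite /glue.
by case: ifP => //= ->.
Qed.

Lemma eq_prefix n x y : (forall i, i < n -> x i = y i) -> prefix n x = prefix n y.
Proof. by move=> exy; apply: eq_from_tnth => j; rewrite /prefix !tnth_mktuple exy. Qed.

Definition local_to (n : nat) (g : X -> X) : Prop :=
  (forall x i, n <= i -> g x i = x i) /\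
  (forall x y, (forall i, i < n -> x i = y i) -> forall i, i < n -> g x i = g y i).

Lemma finitary_local g : finitary g -> exists n, local_to n g /\ injective g.
Proof.
case=> n [s gE]; exists n; split; first split.
- by move=> x i le_ni; rewrite gE /glue ltnNge le_ni.
- by move=> x y exy i lt_in; rewrite !gE /glue lt_in (eq_prefix exy).
move=> x y gxy; have exy : prefix n x = prefix n y.
  apply: (@perm_inj _ s).
  by rewrite -(prefix_glue (s (prefix n x)) x) -(prefix_glue (s (prefix n y)) y) -!gE gxy.
apply: functional_extensionality => i; case: (ltnP i n) => [lt_in | le_ni].
  by rewrite -(nth_prefix x lt_in) -(nth_prefix y lt_in) exy.
by have := congr1 (fun f => f i) gxy; rewrite !gE /glue ltnNge le_ni.
Qed.

Lemma local_finitary n g : local_to n g -> injective g -> finitary g.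
Proof.
move=> [g_high g_low] g_inj; pose x0 : X := fun _ => false.
pose s := fun t : n.-tuple bool => prefix n (g (glue t x0)).
have s_inj : injective s.
  move=> t1 t2 st12; suff e : glue t1 x0 = glue t2 x0.
    by rewrite -(prefix_glue t1 x0) e prefix_glue.
  apply: g_inj; apply: functional_extensionality => i; case: (ltnP i n) => lt_in.
    by have := congr1 (fun t : n.-tuple bool => nth false t i) st12; rewrite /s !nth_prefix.
  by rewrite !g_high // /glue ltnNge lt_in.
exists n, (perm s_inj) => x; rewrite permE /s.
apply: functional_extensionality => i; rewrite /glue; case: ifP => lt_in.
  by rewrite nth_prefix //; apply: g_low => // j lt_jn; rewrite /glue lt_jn nth_prefix.
by rewrite g_high // leqNgt lt_in.
Qed.

Lemma local_toW n n' g : n <= n' -> local_to n g -> local_to n' g.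
Proof.
move=> le_nn' [g_high g_low]; split=> [x i le_n'i|x y exy i lt_in'].
  exact/g_high/(leq_trans le_nn').
case: (ltnP i n) => [lt_in | le_ni]; last by rewrite !g_high // exy.
by apply: g_low => // j lt_jn; apply/exy/(leq_trans lt_jn).
Qed.

Lemma local_to_comp n f g : local_to n f -> local_to n g -> local_to n (f \o g).
Proof.
move=> [f_high f_low] [g_high g_low]; split=> [x i le_ni | x y exy i lt_in] /=.
  by rewrite f_high // g_high.
by apply: f_low => // j lt_jn; apply: g_low.
Qed.

Lemma finitary_comp f g : finitary f -> finitary g -> finitary (f \o g).
Proof.
move=> /finitary_local[n1 [f_loc f_inj]] /finitary_local[n2 [g_loc g_inj]].
apply: (@local_finitary (maxn n1 n2)); last exact: inj_comp.
by apply: local_to_comp;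
  [exact: local_toW (leq_maxl n1 n2) f_loc | exact: local_toW (leq_maxr n1 n2) g_loc].
Qed.

Lemma finitary_inv g : finitary g ->
  exists g', [/\ finitary g', cancel g g' & cancel g' g].
Proof.
case=> n [s gE]; exists (fun x => glue ((s^-1)%g (prefix n x)) x); split.
- by exists n, (s^-1)%g.
- by move=> x; rewrite gE prefix_glue permK glueKl glue_prefix.
- by move=> x; rewrite gE prefix_glue permKV glueKl glue_prefix.
Qed.

Lemma flipK j : involutive (flip j).
Proof.
move=> x; apply: functional_extensionality => i; rewrite /flip.
by case: eqP => // _; rewrite negbK.
Qed.

Lemma flipC i j x : flip i (flip j x) = flip j (flip i x).
Proof.
apply: functional_extensionality => l; rewrite /flip.
by case: (l == i); case: (l == j).
Qed.

Lemma in_nice_flip k (Cs : {set k.-tuple bool}) j x : k <= j ->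
  in_nice Cs (flip j x) = in_nice Cs x.
Proof.
move=> le_kj; rewrite /in_nice (@eq_prefix k _ x) // => i lt_ik.
by rewrite /flip; case: eqP => // eij; move: lt_ik; rewrite eij ltnNge le_kj.
Qed.

Definition cnot (c t : nat) (x : X) : X :=
  fun i => if i == t then x t (+) x c else x i.

Lemma cnotK c t : c != t -> involutive (cnot c t).
Proof.
move=> ne_ct x; apply: functional_extensionality => i; rewrite /cnot.
by case: eqP => [->|//]; rewrite eqxx (negbTE ne_ct) -addbA addbb addbF.
Qed.

Lemma cnot_finitary c t : c != t -> finitary (cnot c t).
Proof.
move=> ne_ct; apply: (@local_finitary (maxn c t).+1); last exact: can_inj (cnotK ne_ct).
split=> [x i lt_i | x y exy i lt_i]; rewrite /cnot.
  by case: eqP => // eit; move: lt_i; rewrite eit ltnNge leq_maxr.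
have lt_c : c < (maxn c t).+1 by rewrite ltnS leq_maxl.
have lt_t : t < (maxn c t).+1 by rewrite ltnS leq_maxr.
by case: eqP => _; rewrite !exy.
Qed.

Lemma cnot_comm n w c t : local_to n w -> n <= c -> n <= t ->
  cnot c t \o w = w \o cnot c t.
Proof.
move=> [w_high w_low] le_nc le_nt; apply: functional_extensionality => x /=.
apply: functional_extensionality => i; case: (ltnP i n) => [lt_in | le_ni].
  have ne_t j : j < n -> (j == t) = false.
    by move=> lt_jn; apply/eqP => ejt; move: lt_jn; rewrite ejt ltnNge le_nt.
  by rewrite /cnot ne_t //; apply: w_low => // j lt_jn; rewrite ne_t.
by rewrite [RHS]w_high // /cnot; case: eqP => _; rewrite !w_high.
Qed.

Section NiceFlips.
Variables (k : nat) (Cs : {set k.-tuple bool}).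

Lemma sA_involutive j : k <= j -> involutive (sA Cs j.+1).
Proof.
move=> le_kj x; rewrite /sA; case nx: (in_nice Cs x); first by rewrite nx.
by rewrite in_nice_flip // nx flipK.
Qed.

Lemma sA_comm i j x : k <= i -> k <= j ->
  sA Cs i.+1 (sA Cs j.+1 x) = sA Cs j.+1 (sA Cs i.+1 x).
Proof.
move=> le_ki le_kj; rewrite /sA; case nx: (in_nice Cs x); first by rewrite nx.
by rewrite !in_nice_flip // nx flipC.
Qed.

Lemma sA_local j : k <= j -> local_to j.+1 (sA Cs j.+1).
Proof.
move=> le_kj; split=> [x i lt_ji | x y exy i lt_ij].
  by rewrite /sA /flip; case: ifP => // _; case: eqP => // eij; rewrite eij ltnn in lt_ji.
rewrite /sA /in_nice (@eq_prefix k x y) => [|l lt_lk].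
  by case: ifP => _; rewrite /flip exy.
exact/exy/(leq_trans lt_lk (leqW le_kj)).
Qed.

Lemma sA_finitary j : k <= j -> finitary (sA Cs j.+1).
Proof.
move=> le_kj; apply: (local_finitary (sA_local le_kj)).
exact: can_inj (sA_involutive le_kj).
Qed.

Lemma cnot_sA a b : k <= a -> k <= b -> a != b ->
  cnot b a \o sA Cs b.+1 \o cnot b a = sA Cs a.+1 \o sA Cs b.+1.
Proof.
move=> le_ka le_kb ne_ab; apply: functional_extensionality => x /=.
have nice_cnot y : in_nice Cs (cnot b a y) = in_nice Cs y.
  rewrite /in_nice (@eq_prefix k _ y) // => i lt_ik.
  by rewrite /cnot; case: eqP => // eia; move: lt_ik; rewrite eia ltnNge le_ka.
rewrite /sA nice_cnot; case nx: (in_nice Cs x).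
  by rewrite /= cnotK 1?eq_sym // nx.
rewrite in_nice_flip // nx; apply: functional_extensionality => i.
have ne_ba : (b == a) = false by rewrite eq_sym (negbTE ne_ab).
rewrite /cnot /flip; case: (eqVneq i a) => [->|//]; rewrite /= !eqxx ne_ba (negbTE ne_ab).
by case: (x a); case: (x b).
Qed.

End NiceFlips.

Local Open Scope ring_scope.

(** * Inner product spaces *)

Section Scalars.
Variable F : numFieldType.

Lemma eq_of_norm_lt (a b : F) : (forall e : F, 0 < e -> `|a - b| < e) -> a = b.
Proof.
move=> small_ab; apply/eqP; rewrite -subr_eq0 -normr_eq0 eq_le normr_ge0 andbT.
by apply/ler_addgt0Pr => e e0; rewrite add0r ltW ?small_ab.
Qed.

Lemma exists_small_factor (B e : F) : 0 <= B -> 0 < e ->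
  exists d : F, [/\ 0 < d, d <= 1 & B * d < e].
Proof.
move=> B0 e0; have den : 0 < B + e + 1 by rewrite -addrA ltr_wpDl // ltr_wpDl // ltW.
exists (e / (B + e + 1)); split; first exact: divr_gt0.
  by rewrite ler_pdivrMr // mul1r -addrA addrCA lerDl addr_ge0.
rewrite mulrA ltr_pdivrMr //.
have -> : e * (B + e + 1) = B * e + e * (e + 1) by ring.
by rewrite ltrDl mulr_gt0 // ltr_wpDl // ltW.
Qed.

Lemma normB_sqr_le (x y : F) : `|x - y| ^+ 2 <= 2 * `|x| ^+ 2 + 2 * `|y| ^+ 2.
Proof.
apply: le_trans (lerXn2r 2 _ _ (ler_normB x y)) _; rewrite ?nnegrE ?addr_ge0 //.
rewrite -subr_ge0.
have -> : 2 * `|x| ^+ 2 + 2 * `|y| ^+ 2 - (`|x| + `|y|) ^+ 2 = (`|x| - `|y|) ^+ 2 by ring.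
by rewrite real_exprn_even_ge0 // realB // ger0_real.
Qed.

End Scalars.

Lemma exists_inv_nat_lt (R : realType) (B e : R[i]) : 0 <= B -> 0 < e ->
  exists N : nat, forall p : nat, (N <= p)%N -> B / p.+1%:R < e.
Proof.
move=> B0 e0; have /ger0_Im Be_Im := divr_ge0 B0 (ltW e0).
pose N := Num.truncn (complex.Re (B / e)).
have Be_lt : B / e < N.+1%:R.
  rewrite -(rmorph_nat (real_complex R)) ltcE /= Be_Im eqxx /=; exact: truncnS_gt.
exists N => p le_Np; rewrite ltr_pdivrMr ?ltr0n // -ltr_pdivrMl // mulrC.
by apply: lt_le_trans Be_lt _; rewrite ler_nat.
Qed.

Section InnerProduct.
Variable R : realType.
Local Notation C := R[i].
Variables (H : lmodType C) (ip : H -> H -> C).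
Hypothesis ip_inner : is_inner_product ip.

Lemma ipDZl a u w v : ip (a *: u + w) v = a * ip u v + ip w v.
Proof. by case: ip_inner. Qed.
Lemma ipC u v : ip u v = (ip v u)^*.
Proof. by case: ip_inner. Qed.
Lemma ipuu_ge0 u : 0 <= ip u u.
Proof. by case: ip_inner. Qed.
Lemma ipuu_eq0 u : ip u u = 0 -> u = 0.
Proof. by case: ip_inner => _ _ _; apply. Qed.

Lemma ipDl u w v : ip (u + w) v = ip u v + ip w v.
Proof. by rewrite -[u]scale1r ipDZl mul1r scale1r. Qed.
Lemma ip0l v : ip 0 v = 0.
Proof. by apply: (@addrI _ (ip 0 v)); rewrite -ipDl !addr0. Qed.
Lemma ipZl a u v : ip (a *: u) v = a * ip u v.
Proof. by rewrite -[a *: u]addr0 ipDZl ip0l addr0. Qed.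
Lemma ipNl u v : ip (- u) v = - ip u v.
Proof. by rewrite -scaleN1r ipZl mulN1r. Qed.
Lemma ipBl u w v : ip (u - w) v = ip u v - ip w v.
Proof. by rewrite ipDl ipNl. Qed.
Lemma ipDr u v w : ip u (v + w) = ip u v + ip u w.
Proof. by rewrite ipC ipDl rmorphD /= -!ipC. Qed.
Lemma ipZr a u v : ip u (a *: v) = a^* * ip u v.
Proof. by rewrite ipC ipZl rmorphM /= -ipC. Qed.
Lemma ip0r u : ip u 0 = 0.
Proof. by rewrite ipC ip0l rmorph0. Qed.
Lemma ipNr u v : ip u (- v) = - ip u v.
Proof. by rewrite ipC ipNl rmorphN /= -ipC. Qed.
Lemma ipBr u v w : ip u (v - w) = ip u v - ip u w.
Proof. by rewrite ipDr ipNr. Qed.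

Lemma ip_suml n (F : 'I_n -> H) v :
  ip (\sum_(i < n) F i) v = \sum_(i < n) ip (F i) v.
Proof. by elim/big_rec2: _ => [|i x y _ <-]; rewrite ?ip0l ?ipDl. Qed.
Lemma ip_sumr n (F : 'I_n -> H) v :
  ip v (\sum_(i < n) F i) = \sum_(i < n) ip v (F i).
Proof. by elim/big_rec2: _ => [|i x y _ <-]; rewrite ?ip0r ?ipDr. Qed.

Lemma ip_sum n m (x : 'I_n -> H) (y : 'I_m -> H) :
  ip (\sum_(i < n) x i) (\sum_(j < m) y j) = \sum_(i < n) \sum_(j < m) ip (x i) (y j).
Proof. by rewrite ip_suml; apply: eq_bigr => i _; rewrite ip_sumr. Qed.

Lemma ipuuN u : ip (- u) (- u) = ip u u.
Proof. by rewrite ipNl ipNr opprK. Qed.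

Lemma ipuuZ a u : ip (a *: u) (a *: u) = `|a| ^+ 2 * ip u u.
Proof. by rewrite ipZl ipZr mulrA normCK. Qed.

Lemma ipuu_subC u v : ip (u - v) (u - v) = ip (v - u) (v - u).
Proof. by rewrite -ipuuN opprB. Qed.

Lemma ipuuD_le u v : ip (u + v) (u + v) <= 2 * ip u u + 2 * ip v v.
Proof.
rewrite -subr_ge0.
have -> : 2 * ip u u + 2 * ip v v - ip (u + v) (u + v) = ip (u - v) (u - v).
  by rewrite !(ipDl, ipDr, ipNl, ipNr); ring.
exact: ipuu_ge0.
Qed.

Lemma ip_CauchySchwarz u v : `|ip u v| ^+ 2 <= ip u u * ip v v.
Proof.
have [v0|nz_v] := eqVneq (ip v v) 0.
  by rewrite (ipuu_eq0 v0) !ip0r normr0 expr0n mulr0.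
have v_gt0 : 0 < ip v v by rewrite lt0r nz_v ipuu_ge0.
set c := ip u v; set d := ip v v.
(* expand [0 <= |u - (c / d) v|^2] *)
have := ipuu_ge0 (u - (c / d) *: v).
rewrite ipBl !ipBr !ipZl !ipZr -/c -/d [ip v u]ipC -/c rmorphM /= fmorphV /=.
rewrite (geC0_conj (ipuu_ge0 v)) -/d.
have -> : ip u u - c^* / d * c - (c / d * c^* - c / d * (c^* / d * d)) =
          ip u u - c * c^* / d by field.
by rewrite subr_ge0 ler_pdivrMr // -normCK.
Qed.

Lemma ipuu_sum_le n (y : 'I_n -> H) :
  ip (\sum_(i < n) y i) (\sum_(i < n) y i) <= n%:R * \sum_(i < n) ip (y i) (y i).
Proof.
set Q := \sum_(i < n) ip (y i) (y i).
rewrite ip_suml; under eq_bigr => i _ do rewrite ip_sumr.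
set S := \sum_(i < n) \sum_(j < n) ip (y i) (y j).
(* sum [0 <= |y i - y j|^2] over all pairs [i, j] *)
have pair_ge0 i j : ip (y i) (y j) + ip (y j) (y i) <= ip (y i) (y i) + ip (y j) (y j).
  rewrite -subr_ge0; set d := (X in 0 <= X).
  have -> : d = ip (y i - y j) (y i - y j) by rewrite /d !(ipDl, ipDr, ipNl, ipNr); ring.
  exact: ipuu_ge0.
have lhsE : \sum_(i < n) \sum_(j < n) (ip (y i) (y j) + ip (y j) (y i)) = 2 * S.
  under eq_bigr => i _ do rewrite big_split.
  by rewrite big_split /= [X in _ + X]exchange_big /= -/S mulr2n mulrDl mul1r.
have rhsE : \sum_(i < n) \sum_(j < n) (ip (y i) (y i) + ip (y j) (y j)) = 2 * (n%:R * Q).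
  under eq_bigr => i _ do rewrite big_split /= sumr_const card_ord.
  rewrite big_split /= exchange_big /=.
  under [X in _ + X]eq_bigr => j _ do rewrite sumr_const card_ord.
  by rewrite sumrMnl -/Q -mulr2n !mulr_natl.
rewrite -(@ler_pM2l _ 2) ?ltr0n // -lhsE -rhsE.
by apply: ler_sum => i _; apply: ler_sum => j _; apply: pair_ge0.
Qed.

Definition converges_to (y : nat -> H) (l : H) := forall e : C, 0 < e ->
  exists N, forall n, (N <= n)%N -> ip (y n - l) (y n - l) < e.

Lemma converges_to_unique y l1 l2 : converges_to y l1 -> converges_to y l2 -> l1 = l2.
Proof.
move=> yl1 yl2; apply/eqP; rewrite -subr_eq0; apply/eqP/ipuu_eq0.
apply/eqP; rewrite eq_le ipuu_ge0 andbT; apply/ler_addgt0Pr => e e0; rewrite add0r.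
have e4 : 0 < e / 4 by rewrite divr_gt0 // ltr0n.
have [N1 yN1] := yl1 _ e4; have [N2 yN2] := yl2 _ e4; set yn := y (maxn N1 N2).
have -> : l1 - l2 = (l1 - yn) + (yn - l2) by rewrite addrA subrK.
apply: le_trans (ipuuD_le _ _) _; rewrite ipuu_subC.
have -> : e = 2 * (e / 4) + 2 * (e / 4) by field.
by rewrite lerD // ler_wpM2l ?ler0n // ltW // ?yN1 ?yN2 ?leq_maxl ?leq_maxr.
Qed.

Lemma converges_to_ip y l v e : converges_to y l -> 0 < e ->
  exists N, forall n, (N <= n)%N -> `|ip (y n) v - ip l v| < e.
Proof.
move=> yl e0; have [d [d0 _ vd]] := exists_small_factor (ipuu_ge0 v) (mulr_gt0 e0 e0).
have [N yN] := yl d d0; exists N => n le_Nn.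
rewrite -ipBl -ltr_sqr ?nnegrE ?normr_ge0 ?(ltW e0) //.
apply: le_lt_trans (ip_CauchySchwarz _ _) _; rewrite expr2.
by apply: le_lt_trans vd; rewrite mulrC ler_wpM2l ?ipuu_ge0 // ltW ?yN.
Qed.

Lemma converges_to_ip_eventually y l v c : converges_to y l ->
  (exists N, forall n, (N <= n)%N -> ip (y n) v = c) -> ip l v = c.
Proof.
move=> yl [N yN]; apply/esym/eq_of_norm_lt => e e0.
have [M yM] := converges_to_ip v yl e0.
by rewrite -(yN (maxn N M)) ?yM ?leq_maxl ?leq_maxr.
Qed.

Lemma converges_to_lin y y' l l' a : converges_to y l -> converges_to y' l' ->
  converges_to (fun n => a *: y n + y' n) (a *: l + l').
Proof.
move=> yl yl' e e0.
have e2 : 0 < e / 2 by rewrite divr_gt0 // ltr0n.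
have e4 : 0 < e / 4 by rewrite divr_gt0 // ltr0n.
have a0 : 0 <= 2 * `|a| ^+ 2 by rewrite mulr_ge0 ?ler0n // exprn_ge0.
have [d [d0 _ ad]] := exists_small_factor a0 e2.
have [N1 yN1] := yl d d0; have [N2 yN2] := yl' _ e4.
exists (maxn N1 N2) => n; rewrite geq_max => /andP[le_N1n le_N2n].
have -> : a *: y n + y' n - (a *: l + l') = a *: (y n - l) + (y' n - l').
  by rewrite scalerBr opprD addrACA.
apply: le_lt_trans (ipuuD_le _ _) _; rewrite ipuuZ mulrA.
have -> : e = e / 2 + 2 * (e / 4) by field.
apply: ltr_leD; first by apply: le_lt_trans ad; rewrite ler_wpM2l // ltW ?yN1.
by rewrite ler_wpM2l ?ler0n // ltW ?yN2.
Qed.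

Lemma converges_to_ipuu_le y l b : converges_to y l ->
  (forall n, ip (y n) (y n) <= b) -> ip l l <= 2 * b.
Proof.
move=> yl yb; apply/ler_addgt0Pr => e e0.
have e2 : 0 < e / 2 by rewrite divr_gt0 // ltr0n.
have [N yN] := yl _ e2.
have -> : l = (l - y N) + y N by rewrite subrK.
apply: le_trans (ipuuD_le _ _) _; rewrite ipuu_subC addrC.
have -> : 2 * b + e = 2 * b + 2 * (e / 2) by field.
by rewrite lerD // ler_wpM2l ?ler0n // ltW ?yN.
Qed.

(* An epsilon/3 argument, approximating [u] and [v] from [D]. *)
Lemma eventually_small_of_dense (D : H -> Prop) (F : nat -> H -> H -> C) (K : C) :
  (forall v e, 0 < e -> exists v', D v' /\ ip (v - v') (v - v') < e) ->
  0 <= K ->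
  (forall m u u' v, F m (u - u') v = F m u v - F m u' v) ->
  (forall m u v v', F m u (v - v') = F m u v - F m u v') ->
  (forall m u v, `|F m u v| ^+ 2 <= K * ip u u * ip v v) ->
  (forall u v, D u -> D v -> exists N, forall m, (N <= m)%N -> F m u v = 0) ->
  forall u v e, 0 < e -> exists N, forall m, (N <= m)%N -> `|F m u v| < e.
Proof.
move=> dense K0 FBl FBr F_bound F_D u v e e0.
have e2 : 0 < e / 2 by rewrite divr_gt0 // ltr0n.
have e2sq : 0 < (e / 2) ^+ 2 by rewrite exprn_gt0.
have ltF m a b B : 0 <= B -> B < (e / 2) ^+ 2 -> K * ip a a * ip b b <= B ->
    `|F m a b| < e / 2.
  move=> B0 B_lt le_B; rewrite -ltr_sqr ?nnegrE ?normr_ge0 ?(ltW e2) //.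
  exact: le_lt_trans (le_trans (F_bound m a b) le_B) B_lt.
have [d1 [d1_0 d1_1 vd1]] := exists_small_factor (mulr_ge0 K0 (ipuu_ge0 v)) e2sq.
have [u' [Du' uu']] := dense u d1 d1_0.
have B0 : 0 <= K * (2 * ip u u + 2).
  by rewrite mulr_ge0 // addr_ge0 ?mulr_ge0 ?ipuu_ge0.
have [d2 [d2_0 _ ud2]] := exists_small_factor B0 e2sq.
have [v' [Dv' vv']] := dense v d2 d2_0.
have [N FN] := F_D _ _ Du' Dv'; exists N => m le_Nm.
have -> : F m u v = F m (u - u') v + F m u' (v - v') + F m u' v'.
  by rewrite FBl FBr !addrA !subrK.
rewrite FN // addr0; apply: le_lt_trans (ler_normD _ _) _.
have -> : e = e / 2 + e / 2 by field.
have u'_le : ip u' u' <= 2 * ip u u + 2.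
  have -> : u' = u + - (u - u') by rewrite opprB addrC subrK.
  apply: le_trans (ipuuD_le _ _) _; rewrite ipuuN lerD2l ler_piMr ?ler0n //.
  exact: le_trans (ltW uu') d1_1.
apply: ltrD.
- apply: (ltF _ _ _ _ (mulr_ge0 (mulr_ge0 K0 (ipuu_ge0 v)) (ltW d1_0)) vd1).
  by rewrite mulrAC ler_wpM2l ?mulr_ge0 ?ipuu_ge0 // ltW.
- apply: (ltF _ _ _ _ (mulr_ge0 B0 (ltW d2_0)) ud2).
  by rewrite -!mulrA ler_wpM2l // ler_pM ?ipuu_ge0 // ltW.
Qed.

End InnerProduct.

(** * Averages of unitary involutions *)

Section LinearMaps.
Variables (K : pzRingType) (V : lmodType K) (f : V -> V).
Hypothesis f_lin : linear f.

Lemma lin_mapB u v : f (u - v) = f u - f v.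
Proof. exact: (zmod_morphism_linear f_lin u v). Qed.

Lemma lin_map0 : f 0 = 0.
Proof. by have := lin_mapB 0 0; rewrite !subrr. Qed.

End LinearMaps.

Section AsymptoticallyConstant.
Variable R : realType.
Local Notation C := R[i].
Variables (H : lmodType C) (ip : H -> H -> C) (T : nat -> H -> H).
Hypothesis ip_inner : is_inner_product ip.
Hypothesis T_lin : forall m, linear (T m).

Definition asymptotically_constant (u v : H) := exists N L, forall i j,
  (N <= i)%N -> (N <= j)%N -> ip (T i u) v = L /\ (i != j -> ip (T i u) (T j v) = L).

Lemma asymptotically_constant0l v : asymptotically_constant 0 v.
Proof. by exists 0%N, 0 => i j _ _; rewrite lin_map0 // !(ip0l ip_inner). Qed.

Lemma asymptotically_constant0r u : asymptotically_constant u 0.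
Proof. by exists 0%N, 0 => i j _ _; rewrite lin_map0 // !(ip0r ip_inner). Qed.

Lemma asymptotically_constantDZl a u u' v :
  asymptotically_constant u v -> asymptotically_constant u' v ->
  asymptotically_constant (a *: u + u') v.
Proof.
move=> [N [L uv]] [N' [L' u'v]]; exists (maxn N N'), (a * L + L') => i j.
rewrite !geq_max => /andP[Ni N'i] /andP[Nj N'j].
have [uv1 uv2] := uv i j Ni Nj; have [u'v1 u'v2] := u'v i j N'i N'j.
by rewrite T_lin !(ipDZl ip_inner) uv1 u'v1; split => // ij; rewrite uv2 ?u'v2.
Qed.

Lemma asymptotically_constantDZr a u v v' :
  asymptotically_constant u v -> asymptotically_constant u v' ->
  asymptotically_constant u (a *: v + v').
Proof.
move=> [N [L uv]] [N' [L' uv']]; exists (maxn N N'), (a^* * L + L') => i j.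
rewrite !geq_max => /andP[Ni N'i] /andP[Nj N'j].
have [uv1 uv2] := uv i j Ni Nj; have [uv'1 uv'2] := uv' i j N'i N'j.
rewrite T_lin !(ipDr ip_inner) !(ipZr ip_inner) uv1 uv'1.
by split => // ij; rewrite uv2 ?uv'2.
Qed.

Lemma asymptotically_constant_span n m (c : 'I_n -> C) (x : 'I_n -> H)
    (d : 'I_m -> C) (y : 'I_m -> H) :
  (forall i j, asymptotically_constant (x i) (y j)) ->
  asymptotically_constant (\sum_(i < n) c i *: x i) (\sum_(j < m) d j *: y j).
Proof.
move=> xy; elim/big_rec: _ => [|i u _ uy]; first exact: asymptotically_constant0l.
apply: asymptotically_constantDZl => //; elim/big_rec: _ => [|j v _ xv].
  exact: asymptotically_constant0r.
exact: asymptotically_constantDZr.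
Qed.

End AsymptoticallyConstant.

Section MeanErgodic.
Variable R : realType.
Local Notation C := R[i].
Variables (H : lmodType C) (ip : H -> H -> C) (T : nat -> H -> H).
Hypothesis ip_inner : is_inner_product ip.
Hypothesis T_lin : forall m, linear (T m).
Hypothesis T_isometry : forall m u v, ip (T m u) (T m v) = ip u v.
Hypothesis T_involutive : forall m, involutive (T m).

Lemma T_selfadjoint m u v : ip (T m u) v = ip u (T m v).
Proof. by rewrite -{1}(T_involutive m v) T_isometry. Qed.

Local Notation ac := (asymptotically_constant ip T).

(* The blocks [p(p+1), p(p+2)] are pairwise disjoint and lie beyond [p]. *)
Definition block (p i : nat) : nat := p * p.+1 + i.

Lemma block_ge p i : (p <= block p i)%N.
Proof. rewrite /block; nia. Qed.

Lemma block_inj p q i j : (i < p.+1)%N -> (j < q.+1)%N -> block p i = block q j ->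
  p = q /\ i = j.
Proof.
rewrite /block => lt_ip lt_jq e.
have pq : p = q by case: (ltngtP p q) => // lt_pq; exfalso; nia.
by split=> //; move: e; rewrite pq => /addnI.
Qed.

Definition average (p : nat) (u : H) : H :=
  (p.+1%:R)^-1 *: \sum_(i < p.+1) T (block p i) u.

Lemma average_lin p : linear (average p).
Proof.
move=> a u v; rewrite /average.
under eq_bigr => i _ do rewrite T_lin.
by rewrite big_split /= -scaler_sumr scalerDr !scalerA mulrC.
Qed.

Lemma average_ipuu_le p u : ip (average p u) (average p u) <= ip u u.
Proof.
rewrite /average (ipuuZ ip_inner).
apply: le_trans (ler_wpM2l (exprn_ge0 _ (normr_ge0 _)) (ipuu_sum_le ip_inner _)) _.
under eq_bigr => i _ do rewrite T_isometry.
rewrite sumr_const card_ord -[ip u u *+ _]mulr_natl ger0_norm ?invr_ge0 ?ler0n //.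
suff -> : p.+1%:R^-1 ^+ 2 * (p.+1%:R * (p.+1%:R * ip u u)) = ip u u by [].
by field; rewrite nat1r pnatr_eq0.
Qed.

Lemma ip_average p q u v : ip (average p u) (average q v) =
  (p.+1%:R)^-1 * (q.+1%:R)^-1 *
  \sum_(i < p.+1) \sum_(j < q.+1) ip (T (block p i) u) (T (block q j) v).
Proof.
rewrite /average (ipZl ip_inner) (ipZr ip_inner) fmorphV /= conjC_nat.
by rewrite (ip_sum ip_inner) mulrA.
Qed.

Lemma ip_averagel u v N L : (forall i, (N <= i)%N -> ip (T i u) v = L) ->
  forall p, (N <= p)%N -> ip (average p u) v = L.
Proof.
move=> uvL p le_Np; rewrite /average (ipZl ip_inner) (ip_suml ip_inner).
under eq_bigr => i _ do rewrite uvL ?(leq_trans le_Np (block_ge _ _)) //.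
by rewrite sumr_const card_ord -[L *+ _]mulr_natl mulrA mulVf ?mul1r // pnatr_eq0.
Qed.

Lemma ip_averager u v N L : (forall j, (N <= j)%N -> ip u (T j v) = L) ->
  forall p, (N <= p)%N -> ip u (average p v) = L.
Proof.
move=> uvL p le_Np; rewrite (ipC ip_inner) (@ip_averagel _ _ N L^*) ?conjCK //.
by move=> j le_Nj; rewrite (ipC ip_inner) uvL.
Qed.

Section AverageGram.
Variables (u : H) (N : nat) (L : C).
Hypothesis uuL : forall i j, (N <= i)%N -> (N <= j)%N -> i != j ->
  ip (T i u) (T j u) = L.

Lemma ip_average_neq p q : p != q -> (N <= p)%N -> (N <= q)%N ->
  ip (average p u) (average q u) = L.
Proof.
move=> ne_pq le_Np le_Nq; rewrite ip_average.
have ne_blocks (i : 'I_p.+1) (j : 'I_q.+1) : block p i != block q j.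
  by apply/eqP => /(block_inj (ltn_ord i) (ltn_ord j))[pq _]; rewrite pq eqxx in ne_pq.
have le_N_block r l : (N <= r)%N -> (N <= block r l)%N.
  by move=> le_Nr; apply: leq_trans le_Nr (block_ge r l).
under eq_bigr => i _ do under eq_bigr => j _ do rewrite uuL ?ne_blocks ?le_N_block //.
rewrite !sumr_const !card_ord -[L *+ _]mulr_natl -[(_ * L) *+ _]mulr_natl.
by field; rewrite !nat1r !pnatr_eq0.
Qed.

Lemma ip_average_diag p : (N <= p)%N ->
  ip (average p u) (average p u) = L + (ip u u - L) / p.+1%:R.
Proof.
move=> le_Np; rewrite ip_average.
have uuE (i j : 'I_p.+1) : ip (T (block p i) u) (T (block p j) u) =
    L + (if j == i then ip u u - L else 0).
  case: eqVneq => [->|ne_ji]; first by rewrite T_isometry addrC subrK.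
  rewrite addr0 uuL ?(leq_trans le_Np (block_ge _ _)) //.
  apply/eqP => /(block_inj (ltn_ord i) (ltn_ord j))[_ /val_inj eij].
  by rewrite eij eqxx in ne_ji.
under eq_bigr => i _ do under eq_bigr => j _ do rewrite uuE.
under eq_bigr => i _ do rewrite big_split /= sumr_const card_ord -big_mkcond /= big_pred1_eq.
rewrite big_split /= !sumr_const !card_ord -[L *+ _]mulr_natl -[(ip u u - L) *+ _]mulr_natl.
by field; rewrite nat1r pnatr_eq0.
Qed.

End AverageGram.

Lemma average_cauchy_ac u : ac u u -> forall e, 0 < e -> exists N, forall p q,
  (N <= p)%N -> (N <= q)%N ->
  ip (average p u - average q u) (average p u - average q u) < e.
Proof.
move=> [N [L uuL]] e e0.
have e2 : 0 < e / 2 by rewrite divr_gt0 // ltr0n.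
have [M small_M] := exists_inv_nat_lt (normr_ge0 (ip u u - L)) e2.
have uuL' i j : (N <= i)%N -> (N <= j)%N -> i != j -> ip (T i u) (T j u) = L.
  by move=> Ni Nj; case: (uuL i j Ni Nj).
exists (maxn N M) => p q; rewrite !geq_max => /andP[Np Mp] /andP[Nq Mq].
have [->|ne_pq] := eqVneq p q; first by rewrite subrr (ip0l ip_inner).
have distE : ip (average p u - average q u) (average p u - average q u) =
    (ip u u - L) / p.+1%:R + (ip u u - L) / q.+1%:R.
  have ne_qp : q != p by rewrite eq_sym.
  rewrite (ipBl ip_inner) !(ipBr ip_inner) !(ip_average_diag uuL') //.
  by rewrite (ip_average_neq uuL' ne_pq) // (ip_average_neq uuL' ne_qp) //; ring.
rewrite -(ger0_norm (ipuu_ge0 ip_inner _)) distE (splitr e).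
apply: le_lt_trans (ler_normD _ _) _.
by rewrite !normrM !normfV !normr_nat ltrD ?small_M.
Qed.

Variable D : H -> Prop.
Hypothesis D_dense : forall v e, 0 < e -> exists v', D v' /\ ip (v - v') (v - v') < e.
Hypothesis D_ac : forall u v, D u -> D v -> ac u v.

Lemma average_cauchy u e : 0 < e -> exists N, forall p q, (N <= p)%N -> (N <= q)%N ->
  ip (average p u - average q u) (average p u - average q u) < e.
Proof.
move=> e0; have e16 : 0 < e / 16 by rewrite divr_gt0 // ltr0n.
have e4 : 0 < e / 4 by rewrite divr_gt0 // ltr0n.
have [u' [Du' uu']] := D_dense u e16.
have [N u'N] := average_cauchy_ac (D_ac Du' Du') e4.
exists N => p q le_Np le_Nq; set z := u - u'.
have -> : average p u - average q u =
    (average p z - average q z) + (average p u' - average q u').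
  by rewrite /z !(lin_mapB (average_lin _)) addrACA -opprD !subrK.
apply: le_lt_trans (ipuuD_le ip_inner _ _) _.
have z_le : ip (average p z - average q z) (average p z - average q z) <= 4 * ip z z.
  apply: le_trans (ipuuD_le ip_inner _ _) _; rewrite (ipuuN ip_inner).
  have -> : 4 * ip z z = 2 * ip z z + 2 * ip z z by ring.
  by rewrite lerD // ler_wpM2l ?ler0n ?average_ipuu_le.
have -> : e = 2 * (e / 4) + 2 * (e / 4) by field.
apply: ltr_leD; last by rewrite ler_wpM2l ?ler0n // ltW ?u'N.
rewrite ltr_pM2l ?ltr0n //; apply: le_lt_trans z_le _.
by rewrite (_ : e / 4 = 4 * (e / 16)); [rewrite ltr_pM2l ?ltr0n | field].
Qed.

Hypothesis H_complete : is_complete ip.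

Definition mean_proj (u : H) : H :=
  epsilon (inhabits 0) (converges_to ip (fun p => average p u)).

Lemma average_converges u : converges_to ip (fun p => average p u) (mean_proj u).
Proof. by apply: epsilon_spec; apply: H_complete => e; apply: average_cauchy. Qed.

Lemma mean_proj_lin : linear mean_proj.
Proof.
move=> a u v; apply: (converges_to_unique ip_inner (average_converges _)).
have -> : (fun p => average p (a *: u + v)) = (fun p => a *: average p u + average p v).
  by apply: functional_extensionality => p; rewrite average_lin.
exact (converges_to_lin ip_inner a (average_converges u) (average_converges v)).
Qed.

Lemma mean_proj_ipuu_le u : ip (mean_proj u) (mean_proj u) <= 2 * ip u u.
Proof. exact (converges_to_ipuu_le ip_inner (average_converges u) (average_ipuu_le ^~ u)). Qed.

Lemma mean_proj_asymptotic u v : D u -> D v -> exists N L,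
  [/\ forall i, (N <= i)%N -> ip (T i u) v = L,
      ip (mean_proj u) v = L & ip (mean_proj u) (mean_proj v) = L].
Proof.
move=> Du Dv; have [N [L uvL]] := D_ac Du Dv.
have uvL1 i : (N <= i)%N -> ip (T i u) v = L by move=> Ni; case: (uvL i i Ni Ni).
exists N, L; split => //.
  apply: (converges_to_ip_eventually ip_inner (average_converges u)).
  by exists N; apply: ip_averagel.
have Pu_Tv j : (N <= j)%N -> ip (mean_proj u) (T j v) = L.
  move=> Nj; apply: (converges_to_ip_eventually ip_inner (average_converges u)).
  exists (maxn N j.+1); apply: ip_averagel => i; rewrite geq_max => /andP[Ni lt_ji].
  by case: (uvL i j Ni Nj) => _ ->; rewrite // gtn_eqF.
have Pv_Pu : ip (mean_proj v) (mean_proj u) = L^*.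
  apply: (converges_to_ip_eventually ip_inner (average_converges v)); exists N => n Nn.
  by rewrite (ipC ip_inner) (ip_averager Pu_Tv).
by rewrite (ipC ip_inner) Pv_Pu conjCK.
Qed.

Lemma mean_proj_wot : wot_limit ip T mean_proj.
Proof.
pose F m a b := ip (T m a) b - ip (mean_proj a) b.
apply: (@eventually_small_of_dense _ _ _ ip_inner D F 6) => //.
- move=> m a a' b; rewrite /F (lin_mapB (T_lin m)) (lin_mapB mean_proj_lin).
  by rewrite !(ipBl ip_inner); ring.
- by move=> m a b b'; rewrite /F !(ipBr ip_inner); ring.
- move=> m a b; apply: le_trans (normB_sqr_le _ _) _.
  apply: le_trans (lerD (ler_wpM2l (ler0n _ 2) (ip_CauchySchwarz ip_inner _ _))
                        (ler_wpM2l (ler0n _ 2) (ip_CauchySchwarz ip_inner _ _))) _.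
  rewrite T_isometry; have Pa_le := mean_proj_ipuu_le a.
  have b0 := ipuu_ge0 ip_inner b.
  have -> : 6 * ip a a * ip b b = 2 * (ip a a * ip b b) + 2 * (2 * ip a a * ip b b) by ring.
  by rewrite lerD2l ler_wpM2l ?ler0n // ler_wpM2r.
- move=> a b Da Db; have [N [L [Ta_b Pa_b _]]] := mean_proj_asymptotic Da Db.
  by exists N => m Nm; rewrite /F Ta_b ?Pa_b ?subrr.
Qed.

Lemma mean_proj_selfadjoint u v : ip (mean_proj u) v = ip u (mean_proj v).
Proof.
apply: eq_of_norm_lt => e e0; have e2 : 0 < e / 2 by rewrite divr_gt0 // ltr0n.
have [N1 uv] := mean_proj_wot u v e2; have [N2 vu] := mean_proj_wot v u e2.
set m := maxn N1 N2.
have -> : ip (mean_proj u) v - ip u (mean_proj v) =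
   - (ip (T m u) v - ip (mean_proj u) v) + (ip (T m v) u - ip (mean_proj v) u)^*.
  by rewrite rmorphB /= -!(ipC ip_inner) T_selfadjoint; ring.
apply: le_lt_trans (ler_normD _ _) _; rewrite normrN norm_conjC (splitr e).
by rewrite ltrD ?uv ?vu ?leq_maxl ?leq_maxr.
Qed.

Lemma mean_proj_ip_idem a b : ip (mean_proj a) (mean_proj b) = ip (mean_proj a) b.
Proof.
pose F (m : nat) a b := ip (mean_proj a) (mean_proj b) - ip (mean_proj a) b.
have F_small : forall u v e, 0 < e -> exists N, forall m, (N <= m)%N -> `|F m u v| < e.
  apply: (@eventually_small_of_dense _ _ _ ip_inner D F 12) => //.
  - by move=> m x x' y; rewrite /F !(lin_mapB mean_proj_lin) !(ipBl ip_inner); ring.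
  - by move=> m x y y'; rewrite /F !(lin_mapB mean_proj_lin) !(ipBr ip_inner); ring.
  - move=> m x y; apply: le_trans (normB_sqr_le _ _) _.
    apply: le_trans (lerD (ler_wpM2l (ler0n _ 2) (ip_CauchySchwarz ip_inner _ _))
                          (ler_wpM2l (ler0n _ 2) (ip_CauchySchwarz ip_inner _ _))) _.
    have Px_le := mean_proj_ipuu_le x; have Py_le := mean_proj_ipuu_le y.
    have x0 := ipuu_ge0 ip_inner x; have y0 := ipuu_ge0 ip_inner y.
    have Px0 := ipuu_ge0 ip_inner (mean_proj x).
    have Py0 := ipuu_ge0 ip_inner (mean_proj y).
    have -> : 12 * ip x x * ip y y =
      2 * ((2 * ip x x) * (2 * ip y y)) + 2 * ((2 * ip x x) * ip y y) by ring.
    by rewrite lerD // ler_wpM2l ?ler0n // ler_pM.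
  - move=> x y Dx Dy; have [N [L [_ Px_y Px_Py]]] := mean_proj_asymptotic Dx Dy.
    by exists N => m _; rewrite /F Px_y Px_Py subrr.
apply: eq_of_norm_lt => e e0; have [N FN] := F_small a b e e0.
exact: FN N (leqnn N).
Qed.

Lemma mean_proj_idem u : mean_proj (mean_proj u) = mean_proj u.
Proof.
apply/eqP; rewrite -subr_eq0; apply/eqP/(ipuu_eq0 ip_inner).
have PPu w : ip (mean_proj (mean_proj u)) w = ip (mean_proj u) w.
  by rewrite mean_proj_selfadjoint mean_proj_ip_idem.
by rewrite (ipBl ip_inner) !PPu subrr.
Qed.

Theorem wot_limit_orth_projection :
  exists P, wot_limit ip T P /\ is_orth_projection ip P.
Proof.
exists mean_proj; split; first exact: mean_proj_wot.
split; [exact: mean_proj_lin | exact: mean_proj_idem | exact: mean_proj_selfadjoint].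
Qed.

End MeanErgodic.

Lemma wot_limit_shift (R : realType) (H : lmodType R[i]) (ip : H -> H -> R[i])
    (T : nat -> H -> H) (P : H -> H) n :
  wot_limit ip (fun m => T (n + m)%N) P -> wot_limit ip T P.
Proof.
move=> TP u v e e0; have [N TN] := TP u v e e0.
exists (n + N)%N => m le_m; have le_nm : (n <= m)%N by lia.
by rewrite -(subnKC le_nm); apply: TN; lia.
Qed.

(** * The representation of the flips [s^A_m] *)

Section GNS.
Variable R : realType.
Local Notation C := R[i].
Variables (chi : (X -> X) -> C) (H : lmodType C) (ip : H -> H -> C)
  (pi : (X -> X) -> H -> H) (xi : H) (k : nat) (Cs : {set k.-tuple bool}).
Hypothesis chi_char : is_character chi.
Hypothesis pi_unitary : is_unitary_rep ip pi.
Hypothesis chi_pi : forall g, finitary g -> chi g = ip (pi g xi) xi.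

Lemma chi_trace g h : finitary g -> finitary h -> chi (g \o h) = chi (h \o g).
Proof. by case: chi_char => trace _ _; apply: trace. Qed.

Lemma pi_lin g : finitary g -> linear (pi g).
Proof. by case: pi_unitary => lin _ _ _ _ /lin. Qed.

Lemma pi_isometry g : finitary g -> forall u v, ip (pi g u) (pi g v) = ip u v.
Proof. by case: pi_unitary => _ _ iso _ _ /iso. Qed.

Lemma pi_comp g h : finitary g -> finitary h -> forall u, pi (g \o h) u = pi g (pi h u).
Proof. by case: pi_unitary => _ _ _ comp _ fg fh u; apply: comp. Qed.

Lemma ip_pi g f f' : finitary g -> finitary f -> finitary f' -> cancel f' f ->
  ip (pi g xi) (pi f xi) = chi (f' \o g).
Proof.
move=> fin_g fin_f fin_f' f'K.
have -> : pi g xi = pi f (pi (f' \o g) xi).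
  rewrite -pi_comp //; last exact: finitary_comp.
  by congr (pi _ xi); apply: functional_extensionality => x /=; rewrite f'K.
by rewrite pi_isometry // chi_pi //; apply: finitary_comp.
Qed.

Local Notation s i := (sA Cs (k + i).+1).
Local Notation T i := (pi (s i)).

Lemma s_finitary i : finitary (s i).
Proof. exact/sA_finitary/leq_addr. Qed.

(* The gate [g] below commutes with [w] and conjugates [s j] into [s i \o s j]. *)
Lemma chi_sA_sA w n i j : local_to n w -> finitary w ->
  (n <= i)%N -> (n <= j)%N -> i != j -> chi (s i \o (s j \o w)) = chi (s j \o w).
Proof.
move=> w_loc fin_w le_ni le_nj ne_ij.
have ne_kij : k + i != k + j by rewrite eqn_add2l.
pose g := cnot (k + j) (k + i).
have gK : involutive g by apply: cnotK; rewrite eq_sym.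
have fin_g : finitary g by apply: cnot_finitary; rewrite eq_sym.
have -> : s i \o (s j \o w) = g \o ((s j \o w) \o g).
  have gw : g \o w = w \o g.
    exact: cnot_comm w_loc (leq_trans le_nj (leq_addl k j)) (leq_trans le_ni (leq_addl k i)).
  apply: functional_extensionality => x /=.
  have := congr1 (fun f => f (w x)) (cnot_sA Cs (leq_addr i k) (leq_addr j k) ne_kij).
  by move=> /= <-; rewrite -/g; have := congr1 (fun f => f x) gw => /= ->.
rewrite chi_trace //; last by do 2!apply: finitary_comp => //; apply: s_finitary.
by congr chi; apply: functional_extensionality => x /=; rewrite gK.
Qed.

Lemma chi_sA_asymptotic w : finitary w -> exists N, forall i j,
  (N <= i)%N -> (N <= j)%N -> chi (s i \o w) = chi (s N \o w) /\
  (i != j -> chi (s i \o (s j \o w)) = chi (s N \o w)).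
Proof.
move=> fin_w; have [N [w_loc _]] := finitary_local fin_w.
have chi_s i : (N <= i)%N -> chi (s i \o w) = chi (s N \o w).
  move=> le_Ni; have [->|ne_Ni] := eqVneq N i; first by [].
  rewrite -(chi_sA_sA w_loc fin_w (leqnn N) le_Ni ne_Ni).
  rewrite -(chi_sA_sA w_loc fin_w le_Ni (leqnn N)) 1?eq_sym //; congr chi.
  by apply: functional_extensionality => x /=; rewrite sA_comm ?leq_addr.
exists N => i j le_Ni le_Nj; split; first exact: chi_s.
by move=> ne_ij; rewrite (chi_sA_sA w_loc fin_w le_Ni le_Nj ne_ij) chi_s.
Qed.

Hypothesis ip_inner : is_inner_product ip.

Lemma T_lin m : linear (T m).
Proof. exact/pi_lin/s_finitary. Qed.

Lemma T_isometry m u v : ip (T m u) (T m v) = ip u v.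
Proof. exact/pi_isometry/s_finitary. Qed.

Lemma T_involutive m : involutive (T m).
Proof.
move=> u; rewrite -(pi_comp (s_finitary m) (s_finitary m)).
have -> : s m \o s m = id.
  by apply: functional_extensionality => x /=; rewrite sA_involutive ?leq_addr.
by case: pi_unitary => _ _ _ _ ->.
Qed.

Lemma orbit_asymptotically_constant h h' : finitary h -> finitary h' ->
  asymptotically_constant ip (fun i => T i) (pi h xi) (pi h' xi).
Proof.
move=> fin_h fin_h'; have [h'' [fin_h'' h'K h''K]] := finitary_inv fin_h'.
have [N chiN] := chi_sA_asymptotic (finitary_comp fin_h fin_h'').
exists N, (chi (s N \o (h \o h''))) => i j le_Ni le_Nj.
have fin_sih := finitary_comp (s_finitary i) fin_h.
have fin_sjh' := finitary_comp (s_finitary j) fin_h'.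
have fin_h''sj := finitary_comp fin_h'' (s_finitary j).
rewrite -(pi_comp (s_finitary i) fin_h); split.
  rewrite (ip_pi fin_sih fin_h' fin_h'' h''K).
  exact (etrans (chi_trace fin_h'' fin_sih) (chiN i j le_Ni le_Nj).1).
move=> ne_ij; have sh'K : cancel (h'' \o s j) (s j \o h').
  by move=> x /=; rewrite h''K sA_involutive ?leq_addr.
rewrite -(pi_comp (s_finitary j) fin_h') (ip_pi fin_sih fin_sjh' fin_h''sj sh'K).
rewrite eq_sym in ne_ij.
exact (etrans (chi_trace fin_h'' (finitary_comp (s_finitary j) fin_sih))
              ((chiN j i le_Nj le_Ni).2 ne_ij)).
Qed.

Definition orbit_span (u : H) := exists n (g : 'I_n -> X -> X) (c : 'I_n -> C),
  (forall i, finitary (g i)) /\ u = \sum_(i < n) c i *: pi (g i) xi.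

Lemma orbit_span_asymptotically_constant u v : orbit_span u -> orbit_span v ->
  asymptotically_constant ip (fun i => T i) u v.
Proof.
move=> [n [g [c [fin_g ->]]]] [m [h [d [fin_h ->]]]].
apply: (asymptotically_constant_span ip_inner T_lin) => i j.
exact: orbit_asymptotically_constant.
Qed.

Hypothesis xi_cyclic : is_cyclic ip pi xi.

Lemma orbit_span_dense v e : 0 < e ->
  exists v', orbit_span v' /\ ip (v - v') (v - v') < e.
Proof.
move=> e0; have [n [g [c [fin_g close]]]] := xi_cyclic v e0.
by exists (\sum_(i < n) c i *: pi (g i) xi); split => //; exists n, g, c.
Qed.

Hypothesis H_complete : is_complete ip.

Lemma sA_wot_limit_orth_projection :
  exists P, wot_limit ip (fun m => pi (sA Cs m)) P /\ is_orth_projection ip P.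
Proof.
have [P [TP P_proj]] := wot_limit_orth_projection ip_inner T_lin T_isometry T_involutive
  orbit_span_dense orbit_span_asymptotically_constant H_complete.
by exists P; split => //; apply: (wot_limit_shift (n := k.+1)).
Qed.

End GNS.

Unset Implicit Arguments.
Theorem mainTheorem3 (R : realType) (chi : (X -> X) -> R[i])
    (H : lmodType R[i]) (ip : H -> H -> R[i]) (pi : (X -> X) -> H -> H) (xi : H) :
  is_hilbert ip -> indecomposable chi -> is_GNS_triple chi ip pi xi ->
  forall (k : nat) (Cs : {set k.-tuple bool}),
    exists P : H -> H,
      wot_limit ip (fun m => pi (sA Cs m)) P /\ is_orth_projection ip P.
Proof.
move=> [ip_inner H_complete] [chi_char _] [pi_unitary _ xi_cyclic chi_pi] k Cs.
exact: (sA_wot_limit_orth_projection Cs chi_char pi_unitary chi_pi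
  ip_inner xi_cyclic H_complete).
Qed.
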